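(* Let $K$ be a compact metric space, let $\varepsilon_1>0$ and $0<\delta<\varepsilon_1/34$, and let $(f_n)$ be a sequence in $C(K)$ (real or complex valued) with $\|f_n\|_\infty=1$. Put $A_n=\{k\in K: f_n^+(k)>\varepsilon_1-\delta\}$ and $B_n=\{k\in K:|f_n(k)|<\delta\}$. Suppose that for every $N$ and every partition $\{1,\dots,N\}=I\cup J$ into disjoint sets, $\bigcap_{n\in I}A_n\cap\bigcap_{n\in J}B_n\neq\emptyset$. Then for every $N$ and all scalars $a_1,\dots,a_N$, $$\Big\|\sum_{j=1}^N a_jf_j\Big\|_\infty\ge\frac{\varepsilon_1}{16}\sum_{j=1}^N|a_j| ,$$ i.e. $(f_n)$ is $\frac{16}{\varepsilon_1}$-equivalent to the unit vector basis of $\ell_1$.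
   Context: For real valued $f\in C(K)$, $f^+=\max(f,0)$; for complex valued $f\in C(K)$, $f^+=\min\big((\operatorname{Re}f)^+,(\operatorname{Im}f)^+\big)$. In the real case the scalars $a_j$ are real, in the complex case complex. *)

From HB Require Import structures.
From mathcomp Require Import all_boot all_order all_algebra.
From mathcomp Require Import all_classical all_reals all_analysis.
From mathcomp Require Import complex.
Import Order.TTheory GRing.Theory Num.Theory.
Import numFieldNormedType.Exports.
Set Implicit Arguments. Unset Strict Implicit. Unset Printing Implicit Defensive.
Local Open Scope classical_set_scope.
Local Open Scope ring_scope.

Definition supnorm (R : realType) (C : Type) (nrm : C -> R) (K : Type)
  (f : K -> C) : R := sup [set nrm (f k) | k in [set: K]].

Definition posR (R : realType) (x : R) : R := Num.max x 0.

Definition posC (R : realType) (z : R[i]) : R :=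
  Num.min (Num.max (complex.Re z) 0) (Num.max (complex.Im z) 0).

Definition cmod (R : realType) (z : R[i]) : R := Normc.normc z.

(* The claim of the theorem, for a compact metric space K and scalar field C
   (with modulus nrm and positive part pos).  Indices n are 0-based:
   f n, n < N, plays the role of f_{n+1}. *)
Definition ell1_claim (R : realType) (C : numFieldType) (nrm : C -> R)
  (pos : C -> R) (K : metricType R) : Prop :=
  compact [set: K] ->
  forall (eps1 delta : R) (f : nat -> K -> C),
    0 < eps1 -> 0 < delta -> delta < eps1 / 34 ->
    (forall n, continuous (f n)) ->
    (forall n, supnorm nrm (f n) = 1) ->
    (* A_n = [set k | eps1 - delta < pos (f n k)], B_n = [set k | nrm (f n k) < delta];
       for every N and every partition {0..N-1} = I u J (J = complement of I),
       the intersection of the A_n (n in I) and B_n (n in J) is nonempty *)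
    (forall (N : nat) (I : {set 'I_N}), exists k : K,
        forall i : 'I_N,
          (i \in I -> eps1 - delta < pos (f i k)) /\
          (i \notin I -> nrm (f i k) < delta)) ->
    forall (N : nat) (a : 'I_N -> C),
      eps1 / 16 * (\sum_(j < N) nrm (a j))
        <= supnorm nrm (fun k => \sum_(j < N) a j * f j k).

From HB Require Import structures.
From mathcomp Require Import all_boot all_order all_algebra.
From mathcomp Require Import all_classical all_reals all_analysis.
From mathcomp Require Import complex.
From mathcomp Require Import lra.
Import Order.TTheory GRing.Theory Num.Theory.
Import numFieldNormedType.Exports.
Set Implicit Arguments.
Unset Strict Implicit.
Unset Printing Implicit Defensive.
Local Open Scope ring_scope.
Local Open Scope classical_set_scope.

(** Each scalar [a_j] can be rotated by a unimodular [r] (a power of [-1],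
    resp. of [i]) into a closed "quadrant" (the half-line [[0, oo)], resp.
    the first quadrant), on which a real-linear functional [L] bounded by the
    modulus (the identity, resp. the imaginary part) satisfies
    [L (a z) >= c |a|_1] whenever [f^+(z) > c].  Sorting the indices by the
    rotation they need, one class [I] carries at least a quarter of the total
    weight [W = sum_j |a_j|_1].  At a point [k] of the intersection of the
    [A_n], [n in I], and the [B_n], [n notin I], the functional [L] applied
    to [r * sum_j a_j f_j(k)] is at least
    [(eps1 - delta) W/4 - delta W >= eps1 W / 16] since [delta < eps1 / 34]. *)

Lemma ler_supnorm (R : realType) (C : Type) (nrm : C -> R) (K : Type)
    (g : K -> C) (M : R) (k : K) :
  (forall x, nrm (g x) <= M) -> nrm (g k) <= supnorm nrm g.
Proof.
move=> gM; apply: sup_upper_bound; last by exists k.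
split; first by exists (nrm (g k)), k.
by exists M => _ [x _ <-].
Qed.

(* [sup] of a set without supremum is [0], so [supnorm g = 1] forces [g] to be bounded. *)
Lemma supnorm1_le1 (R : realType) (C : Type) (nrm : C -> R) (K : Type)
    (g : K -> C) :
  supnorm nrm g = 1 -> forall k, nrm (g k) <= 1.
Proof.
move=> g1 k; have [hs|hs] := pselect (has_sup [set nrm (g x) | x in [set: K]]).
  by rewrite -g1; apply: sup_upper_bound => //; exists k.
by move: g1; rewrite /supnorm sup_out // => /eqP; rewrite eq_sym oner_eq0.
Qed.

Lemma exists_ge_mean (R : realFieldType) (n : nat) (F : 'I_n.+1 -> R) :
  exists i, (\sum_(j < n.+1) F j) / n.+1%:R <= F i.
Proof.
apply/not_existsP => below.
have lt_mean i : F i < (\sum_(j < n.+1) F j) / n.+1%:R.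
  by rewrite ltNge; apply/negP/below.
have nonempty : has xpredT (index_enum 'I_n.+1).
  by apply/hasP; exists ord0; rewrite ?mem_index_enum.
have := ltr_sum nonempty (fun i _ => lt_mean i).
by rewrite sumr_const card_ord -[_ *+ n.+1]mulr_natr divfK ?pnatr_eq0 // ltxx.
Qed.

Lemma ell1_arith (R : realFieldType) (eps1 delta s t : R) :
  0 < eps1 -> delta < eps1 / 34 -> 0 <= t -> (s + t) / 4 <= s ->
  eps1 / 16 * (s + t) <= (eps1 - delta) * s - delta * t.
Proof.
move=> e1 de t0 quarter.
have st0 : 0 <= s + t by lra.
have : 0 <= (s + t) * (3 * eps1 / 16 - delta) by apply: mulr_ge0; lra.
have : 0 <= eps1 * (s - (s + t) / 4) by apply: mulr_ge0; lra.
nra.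
Qed.

Section QuadrantRotation.

Variables (R : realType) (C : numFieldType) (nrm pos L w : C -> R).
Variables (rot : 'I_4 -> C) (quadrant : pred C).

Hypotheses (L0 : L 0 = 0) (LD : forall x y, L (x + y) = L x + L y)
  (ler_L_nrm : forall x, L x <= nrm x).
Hypotheses (nrm0 : nrm 0 = 0) (nrmN : forall x, nrm (- x) = nrm x)
  (ler_nrmD : forall x y, nrm (x + y) <= nrm x + nrm y)
  (nrmM : forall x y, nrm (x * y) = nrm x * nrm y).
Hypotheses (nrm_rot : forall m, nrm (rot m) = 1)
  (ler_nrm_w : forall x, nrm x <= w x) (w_rot : forall m x, w (rot m * x) = w x).
Hypotheses (exists_rot_quadrant : forall x, exists m, quadrant (rot m * x))
  (ler_w_L_quadrant : forall c x z, 0 < c -> quadrant x -> c < pos z ->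
     c * w x <= L (x * z)).

Lemma nrm_ge0 x : 0 <= nrm x.
Proof. by have := ler_nrmD x (- x); rewrite subrr nrm0 nrmN; lra. Qed.

Lemma w_ge0 x : 0 <= w x.
Proof. exact: le_trans (nrm_ge0 x) (ler_nrm_w x). Qed.

Lemma ler_nrm_sum I (r : seq I) (P : pred I) (F : I -> C) :
  nrm (\sum_(i <- r | P i) F i) <= \sum_(i <- r | P i) nrm (F i).
Proof.
elim/big_rec2: _ => [|i y s _ ys]; first by rewrite nrm0.
exact: le_trans (ler_nrmD _ _) (lerD (lexx _) ys).
Qed.

Lemma L_sum I (r : seq I) (P : pred I) (F : I -> C) :
  L (\sum_(i <- r | P i) F i) = \sum_(i <- r | P i) L (F i).
Proof. exact: big_morph. Qed.

Lemma lerN_nrm_L x : - nrm x <= L x.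
Proof.
have := LD x (- x); rewrite subrr L0.
by have := ler_L_nrm (- x); rewrite nrmN; lra.
Qed.

Definition quadrant_rot x : 'I_4 := odflt ord0 [pick m | quadrant (rot m * x)].

Lemma quadrant_rotP x : quadrant (rot (quadrant_rot x) * x).
Proof.
rewrite /quadrant_rot; case: pickP => //= none.
by have [m] := exists_rot_quadrant x; rewrite none.
Qed.

Lemma ler_L_rot_sum N (a F : 'I_N -> C) (m : 'I_4) (I : {set 'I_N}) (c d : R) :
    0 < c ->
    (forall j, j \in I -> quadrant (rot m * a j) /\ c < pos (F j)) ->
    (forall j, j \notin I -> nrm (F j) < d) ->
  c * \sum_(j in I) w (a j) - d * \sum_(j | j \notin I) w (a j)
    <= L (rot m * \sum_(j < N) a j * F j).
Proof.
move=> c0 inI notinI.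
rewrite [rot m * _]mulr_sumr L_sum [X in _ <= X](bigID (mem I)) /=; apply: lerD.
  rewrite mulr_sumr; apply: ler_sum => j jI; have [qj cj] := inI j jI.
  by rewrite mulrA -(w_rot m); exact: ler_w_L_quadrant.
rewrite mulr_sumr -sumrN; apply: ler_sum => j jI.
apply: le_trans (lerN_nrm_L _); rewrite lerN2 !nrmM nrm_rot mul1r mulrC.
by apply: ler_pM; rewrite ?nrm_ge0 ?ler_nrm_w ?ltW ?notinI.
Qed.

Lemma ell1_claim_quadrant (K : metricType R) : ell1_claim nrm pos K.
Proof.
move=> _ eps1 delta f e1 _ de _ f1 hyp N a.
pose I m := [set j | quadrant_rot (a j) == m]%SET.
pose W := \sum_(j < N) w (a j).
have W_part : W = \sum_(m < 4) \sum_(j in I m) w (a j).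
  rewrite /W (partition_big (fun j => quadrant_rot (a j)) xpredT) //=.
  by apply: eq_bigr => m _; apply: eq_bigl => j; rewrite inE.
have [m heavy] := @exists_ge_mean R 3 (fun m => \sum_(j in I m) w (a j)).
rewrite /= -W_part in heavy.
have [k hk] := hyp N (I m).
pose g x := \sum_(j < N) a j * f j x.
have g_bound x : nrm (g x) <= \sum_(j < N) nrm (a j).
  apply: le_trans (ler_nrm_sum _ _ _) _; apply: ler_sum => j _.
  by rewrite nrmM; apply: ler_piMr; [exact: nrm_ge0 | exact: (supnorm1_le1 (f1 j) x)].
have lower : (eps1 - delta) * \sum_(j in I m) w (a j)
    - delta * \sum_(j | j \notin I m) w (a j) <= L (rot m * g k).
  apply: ler_L_rot_sum => [|j jI|j jI]; first lra.
    split; last by case: (hk j) => + _; apply.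
    by move: jI; rewrite inE => /eqP <-; exact: quadrant_rotP.
  by case: (hk j) => _; apply.
apply: (@le_trans _ _ (eps1 / 16 * W)).
  by rewrite ler_wpM2l ?ler_sum ?ler_nrm_w //; lra.
have rest_ge0 : 0 <= \sum_(j | j \notin I m) w (a j) by rewrite sumr_ge0 // => j _; apply: w_ge0.
rewrite /W (bigID (mem (I m))) /= in heavy *.
apply: le_trans (ell1_arith e1 de rest_ge0 heavy) (le_trans lower _).
apply: le_trans (ler_L_nrm _) _.
by rewrite nrmM nrm_rot mul1r (ler_supnorm _ g_bound).
Qed.

End QuadrantRotation.

Lemma ell1_claim_real (R : realType) (K : metricType R) :
  ell1_claim (C := R) (@Num.norm R R) (@posR R) K.
Proof.
apply: (@ell1_claim_quadrant R R _ _ id (@Num.norm R R) (fun m : 'I_4 => (-1) ^+ m)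
  (fun x => 0 <= x)) => //.
- exact: ler_norm.
- exact: normr0.
- exact: normrN.
- exact: ler_normD.
- exact: normrM.
- by move=> m; rewrite normr_sign.
- by move=> m x; rewrite normrMsign.
- move=> x; have [x0|x0] := lerP 0 x; first by exists ord0; rewrite mul1r.
  by exists (lift ord0 ord0); rewrite /= expr1 mulN1r oppr_ge0 ltW.
- move=> c x z c0 x0; rewrite /posR lt_max (ltNge c 0) (ltW c0) orbF => cz /=.
  by rewrite ger0_norm // mulrC ler_wpM2l // ltW.
Qed.

Definition l1normc (R : realType) (x : R[i]) : R :=
  `|complex.Re x| + `|complex.Im x|.

Lemma mulic (R : realType) (p q : R) :
  ('i * (p +i* q) = (- q) +i* p :> R[i])%C.
Proof. by rewrite [LHS]/GRing.mul /= !mul0r !mul1r sub0r add0r. Qed.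

Lemma cmodXi (R : realType) (m : nat) : cmod ('i%C ^+ m : R[i]) = 1.
Proof.
rewrite /cmod; elim: m => [|m IHm]; first by rewrite expr0 Normc.normc1.
rewrite exprS Normc.normcM IHm mulr1.
by rewrite /Normc.normc /= expr0n /= add0r expr1n sqrtr1.
Qed.

Lemma l1normc_mulil (R : realType) (x : R[i]) : l1normc ('i%C * x) = l1normc x.
Proof. by case: x => p q; rewrite mulic /l1normc /= normrN addrC. Qed.

Lemma l1normcXi (R : realType) (m : nat) (x : R[i]) :
  l1normc ('i%C ^+ m * x) = l1normc x.
Proof.
elim: m => [|m IHm]; first by rewrite expr0 mul1r.
by rewrite exprS -mulrA l1normc_mulil IHm.
Qed.

Lemma ler_cmod_l1normc (R : realType) (x : R[i]) : cmod x <= l1normc x.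
Proof.
case: x => p q; rewrite /cmod /l1normc /= -[X in _ <= X]ger0_norm ?addr_ge0 //.
rewrite -sqrtr_sqr; apply: ler_wsqrtr; rewrite sqrrD !real_normK ?num_real //.
have : 0 <= `|p| * `|q| *+ 2 by rewrite mulrn_wge0 // mulr_ge0.
lra.
Qed.

Lemma ell1_claim_complex (R : realType) (K : metricType R) :
  ell1_claim (C := R[i]) (@cmod R) (@posC R) K.
Proof.
apply: (@ell1_claim_quadrant R R[i] _ _ (@complex.Im R) (@l1normc R)
  (fun m : 'I_4 => 'i%C ^+ m)
  (fun x => (0 <= complex.Re x) && (0 <= complex.Im x))) => //.
- by case=> ? ? [? ?].
- case=> p q; rewrite /cmod /=; apply: le_trans (ler_norm q) _.
  rewrite -sqrtr_sqr; apply: ler_wsqrtr; rewrite lerDr; exact: sqr_ge0.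
- exact: Normc.normc0.
- exact: normcN.
- exact: le_normcD.
- exact: Normc.normcM.
- by move=> m; rewrite cmodXi.
- exact: ler_cmod_l1normc.
- by move=> m x; rewrite l1normcXi.
- case=> p q; have [p0|p0] := lerP 0 p; have [q0|q0] := lerP 0 q.
  + by exists (@Ordinal 4 0 isT); rewrite expr0 mul1r /= p0 q0.
  + by exists (@Ordinal 4 1 isT); rewrite expr1 mulic /= oppr_ge0 p0 ltW.
  + by exists (@Ordinal 4 3 isT); rewrite exprS sqr_i mulrN1 mulNr mulic /= opprK oppr_ge0 q0 ltW.
  + by exists (@Ordinal 4 2 isT); rewrite sqr_i mulN1r /= !oppr_ge0 !ltW.
- move=> c [p q] [u v] c0 /andP[/= p0 q0]; rewrite /posC /= lt_min !lt_max.
  rewrite (ltNge c 0) (ltW c0) !orbF => /andP[cu cv].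
  by rewrite /l1normc /= !ger0_norm //; nra.
Qed.

Theorem mainTheorem12 (R : realType) (K : metricType R) :
  ell1_claim (C := R) (@Num.norm R R) (@posR R) K /\
  ell1_claim (C := R[i]) (@cmod R) (@posC R) K.
Proof. by split; [exact: ell1_claim_real | exact: ell1_claim_complex]. Qed.
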